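(* In the censored multi-armed bandit setting, let $\lambda>0$, $\alpha>0$, $\delta\in(0,1]$, and let $\psi_\alpha$ be a primitive of $x\mapsto x^{-\alpha}$ on $(0,\infty)$. Then $$\sup_{\pi}\mathbb{E}[\mathbb V_\alpha(T,\pi)]\le\frac{d_{\mathrm{eff}}}{(1-\delta)^\alpha}\Big[\psi_\alpha\Big(\frac{T}{d_{\mathrm{eff}}}+\frac{\lambda}{1-\delta}\Big)-\psi_\alpha\Big(\frac{\lambda}{1-\delta}\Big)\Big]+\frac{24d_{\mathrm{eff}}\log T+d}{\lambda^\alpha}+\frac{4d_{\mathrm{eff}}}{\lambda^\alpha\delta^2T^{12\delta^2}},$$ where the supremum is over all policies (in particular over policies adapted to the censorship realizations), and $\mathbb V_\alpha(T,\pi)=\sum_{t=1}^T(N_{a_t}(t-1)+\lambda)^{-\alpha}$. (For $\delta=1$ the first term is interpreted via the stated expression only when $\delta<1$; the statement is intended for $\delta\in(0,1)$.)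
   Context: Censored multi-armed bandit setting. Fix an integer $d\ge 1$ (number of arms) and a horizon $T\ge 2$. Each arm $a\in[d]=\{1,\dots,d\}$ has an unknown mean reward $\theta^\star_a\in\mathbb{R}$. At each round $t=1,\dots,T$ a nonempty action set $\mathcal A_t\subseteq[d]$ is revealed (fixed in advance), the agent selects $a_t\in\mathcal A_t$, and a censorship indicator $x_{a_t}\sim\mathrm{Bernoulli}(p_{a_t})$ is drawn, independently of everything else given $a_t$, where $p_a\in(0,1]$ are fixed parameters; the feedback is observed iff $x_{a_t}=1$. A policy chooses $a_t$ as a (possibly randomized) function of the past (actions, censorship indicators, observed feedbacks). Let $N_a(t)=\#\{l\le t: a_l=a,\ x_{a_l}=1\}$. The effective dimension is $d_{\mathrm{eff}}=\sum_{a\in[d]}1/p_a$. *)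

From HB Require Import structures.
From mathcomp Require Import all_boot all_order all_algebra.
From mathcomp Require Import all_classical all_reals all_analysis.
Set Implicit Arguments. Unset Strict Implicit. Unset Printing Implicit Defensive.
Import Order.TTheory GRing.Theory Num.Theory.
Local Open Scope ring_scope.

(* A history is the sequence of (action, censorship indicator) pairs of the
   past rounds.  Round t (1-based) is preceded by a history of size t-1. *)
Definition history (d : nat) := seq ('I_d * bool).

(* N_a(h) : number of uncensored pulls of arm a in history h. *)
Definition Ncount (d : nat) (h : history d) (a : 'I_d) : nat :=
  count (fun u : 'I_d * bool => (u.1 == a) && u.2) h.

Definition bern {R : realType} (q : R) (x : bool) : R := if x then q else 1 - q.

(* A (randomized, behavioural) policy: pi h a = probability of choosing arm a
   after history h.  Validity on rounds 1..T w.r.t. the action sets A. *)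
Definition valid_policy {R : realType} (d T : nat) (A : nat -> {set 'I_d})
  (pi : history d -> 'I_d -> R) : Prop :=
  forall h : history d, (size h < T)%N ->
    (forall a, 0 <= pi h a) /\ (\sum_(a < d) pi h a = 1) /\
    (forall a, a \notin A (size h).+1 -> pi h a = 0).

Definition traj_prob {R : realType} (d T : nat) (p : 'I_d -> R)
  (pi : history d -> 'I_d -> R) (tau : T.-tuple ('I_d * bool)) : R :=
  \prod_(t < T) (pi (take t tau) (tnth tau t).1 *
                 bern (p (tnth tau t).1) (tnth tau t).2).

Definition Valpha {R : realType} (d T : nat) (lam alpha : R)
  (tau : T.-tuple ('I_d * bool)) : R :=
  \sum_(t < T) (((Ncount (take t tau) (tnth tau t).1)%:R + lam) `^ (- alpha)).

Definition expected_Valpha {R : realType} (d T : nat) (p : 'I_d -> R)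
  (pi : history d -> 'I_d -> R) (lam alpha : R) : R :=
  \sum_(tau : T.-tuple ('I_d * bool)) traj_prob p pi tau * Valpha lam alpha tau.

Definition deff {R : realType} (d : nat) (p : 'I_d -> R) : R :=
  \sum_(a < d) (p a)^-1.

From HB Require Import structures.
From mathcomp Require Import all_boot all_order all_algebra.
From mathcomp Require Import all_classical all_reals all_analysis.
From mathcomp Require Import ring lra.
Import Order.TTheory GRing.Theory Num.Theory.
Local Open Scope ring_scope.
Set Implicit Arguments. Unset Strict Implicit. Unset Printing Implicit Defensive.

(* Write k = pulls of arm a so far (censored or not) and N = N_a its
   uncensored pulls.  Each round's term (N + lam)^(-alpha) is bounded by
   - the ideal term ((1 - delta) p_a k + lam)^(-alpha) when N is not too
     small, whose sum over k telescopes against the primitive psi and is then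
     bounded, uniformly over the split T = sum_a k_a, by a tangent line of
     the concave psi (giving the psi-term and d lam^(-alpha));
   - lam^(-alpha) times the indicator of a burn-in phase k < 24 ln T / p_a
     (giving the 24 d_eff ln T term);
   - lam^(-alpha) times W_a(h) * exp(-delta^2 p_a k / 2) afterwards, where
     W_a = exp(-delta N + p_a (1 - e^(-delta)) k) is a supermartingale, so
     these terms have expectation at most a geometric tail (the last term). *)

Lemma le_of_eq (R : numDomainType) (x y : R) : x = y -> x <= y.
Proof. by move->. Qed.

Section RealFacts.
Variable R : realType.

Lemma mvt_closed (f df : R -> R) (a b : R) : a < b ->
  (forall x, a <= x <= b -> is_derive x 1 f (df x)) ->
  exists2 c, a < c < b & f b - f a = df c * (b - a).
Proof.
move=> ab H.
have [||c cab E] := @MVT R f df a b ab.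
- by move=> x; rewrite in_itv /= => /andP[h1 h2]; apply: H; rewrite !ltW.
- apply: derivable_within_continuous => x; rewrite in_itv /= => xab.
  by have [] := H x xab.
by exists c => //; move: cab; rewrite in_itv.
Qed.

(* Second-order upper bound on exp(-x) for x >= 0: the function
   exp(y) (1 - y + y^2/2) is nondecreasing on [0, +oo) and equals 1 at 0. *)
Lemma expRN_le_quadratic (x : R) : 0 <= x -> expR (- x) <= 1 - x + x ^+ 2 / 2.
Proof.
move=> x0.
pose g : R -> R := fun y => 1 - y + y ^+ 2 / 2.
have Dg (y : R) : is_derive y 1 g (y - 1).
  have Dsq : is_derive y 1 (fun y : R => y ^+ 2 / 2) y.
    by apply: is_derive_eq; rewrite // !scaler0 add0r /GRing.scale /=; field.
  have Dlin : is_derive y 1 (fun y : R => 1 - y) (-1).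
    by apply: is_derive_eq; rewrite // add0r mul1r.
  have -> : y - 1 = -1 + y by ring.
  have -> : g = (fun y : R => 1 - y) + (fun y : R => y ^+ 2 / 2) by apply/funext.
  exact: is_deriveD.
pose phi : R -> R := (@expR R) * g.
have Dphi (y : R) : is_derive y 1 phi (expR y * (y ^+ 2 / 2)).
  have -> : expR y * (y ^+ 2 / 2) = expR y *: (y - 1) + g y *: expR y.
    by rewrite /GRing.scale /= /g; field.
  exact: is_deriveM (is_derive_expR y) (Dg y).
have phiE y : phi y = expR y * g y by [].
have phi0 : phi 0 = 1.
  by rewrite phiE /g expR0 mul1r expr0n /= mul0r subr0 addr0.
have phi_ge1 : 1 <= phi x.
  case: (ltrP 0 x) => [xp|x0']; last by rewrite (@le_anti _ _ x 0) ?x0 ?x0' ?phi0.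
  have [c /andP[c0 cx] E] := mvt_closed xp (fun y _ => Dphi y).
  rewrite -subr_ge0 -phi0 E; apply: mulr_ge0; last by rewrite subr0 ltW.
  by apply: mulr_ge0; [exact: expR_ge0 | apply: divr_ge0; [apply: sqr_ge0|]].
have gx : 0 < g x by rewrite /g; nra.
rewrite expRN -[_ + _ + _]/(g x) -[(expR x)^-1]mulr1 ler_pdivrMl ?expR_gt0 //.
Qed.

Variable alpha : R.
Hypothesis alpha_gt0 : 0 < alpha.

Lemma powRN_le (x y : R) : 0 < x -> x <= y -> y `^ (- alpha) <= x `^ (- alpha).
Proof.
move=> x0 xy; have y0 : 0 < y by exact: lt_le_trans xy.
rewrite !powRN lef_pV2 ?posrE ?powR_gt0 //.
by apply: (ge0_ler_powR (ltW alpha_gt0)) => //; rewrite nnegrE ltW.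
Qed.

Variable psi : R -> R.
Hypothesis psi_deriv : forall x : R, 0 < x -> is_derive x 1 psi (x `^ (- alpha)).

Lemma psi_mvt (u v : R) : 0 < u -> u < v ->
  exists2 c, u < c < v & psi v - psi u = c `^ (- alpha) * (v - u).
Proof.
move=> u0 uv; apply: mvt_closed => // x /andP[ux _].
by apply: psi_deriv; exact: lt_le_trans ux.
Qed.

Lemma psi_increment_ge (u v : R) : 0 < u -> u <= v ->
  v `^ (- alpha) * (v - u) <= psi v - psi u.
Proof.
move=> u0; rewrite le_eqVlt => /orP[/eqP->|uv]; first by rewrite !subrr mulr0.
have [c /andP[uc cv] ->] := psi_mvt u0 uv.
apply: ler_wpM2r; first by rewrite subr_ge0 ltW.
by apply: powRN_le; [exact: lt_trans uc | exact: ltW].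
Qed.

Lemma psi_nondecr (u v : R) : 0 < u -> u <= v -> psi u <= psi v.
Proof.
move=> u0 uv; rewrite -subr_ge0; apply: le_trans (psi_increment_ge u0 uv).
by apply: mulr_ge0; [exact: powR_ge0 | rewrite subr_ge0].
Qed.

Lemma psi_tangent (u v : R) : 0 < u -> 0 < v ->
  psi u - psi v <= v `^ (- alpha) * (u - v).
Proof.
move=> u0 v0; case: (ltgtP u v) => [uv|vu|->]; last by rewrite !subrr mulr0.
- have [c /andP[uc cv] E] := psi_mvt u0 uv.
  rewrite -opprB E -(opprB v u) mulrN lerN2.
  apply: ler_wpM2r; first by rewrite subr_ge0 ltW.
  by apply: powRN_le; [exact: lt_trans uc | exact: ltW].
- have [c /andP[vc cu] ->] := psi_mvt v0 vu.
  apply: ler_wpM2r; first by rewrite subr_ge0 ltW.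
  by apply: powRN_le => //; exact: ltW.
Qed.

End RealFacts.

Section TrajectoryExpectation.
Variables (R : realType) (d : nat) (p : 'I_d -> R) (pi : history d -> 'I_d -> R).

Definition step_prob (h : history d) (x : 'I_d * bool) : R :=
  pi h x.1 * bern (p x.1) x.2.

Fixpoint cond_exp (h : history d) (m : nat) (Phi : history d -> R) : R :=
  match m with
  | 0 => Phi h
  | m'.+1 => \sum_(x : 'I_d * bool) step_prob h x * cond_exp (rcons h x) m' Phi
  end.

Lemma trajectory_sum_cond_exp m : forall h Phi,
  \sum_(tau : m.-tuple ('I_d * bool))
     (\prod_(t < m) step_prob (h ++ take t tau) (tnth tau t)) * Phi (h ++ tau)
  = cond_exp h m Phi.
Proof.
elim: m => [|m IH] h Phi.
  rewrite (big_pred1 [tuple]) /=; last by move=> t; apply/esym/eqP/tuple0.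
  by rewrite big_ord0 mul1r cats0.
pose cons_tuple (y : ('I_d * bool) * m.-tuple ('I_d * bool)) := [tuple of y.1 :: y.2].
rewrite (reindex cons_tuple) /=; last first.
  exists (fun t => (thead t, [tuple of behead t])) => [[x u] _|t _] /=.
    by rewrite theadE; congr pair; apply: val_inj.
  by rewrite [RHS]tuple_eta.
rewrite -(pair_bigA _ (fun x u => (\prod_(t < m.+1) step_prob (h ++ take t
   (cons_tuple (x, u))) (tnth (cons_tuple (x, u)) t)) * Phi (h ++ cons_tuple (x, u)))) /=.
apply: eq_bigr => x _; rewrite -IH mulr_sumr; apply: eq_bigr => u _.
rewrite big_ord_recl tnth0 /= cats0 -mulrA cat_rcons; congr (_ * (_ * _)).
by apply: eq_bigr => i _; rewrite tnthS /= cat_rcons.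
Qed.

Lemma cond_expD m : forall h Phi Psi,
  cond_exp h m (fun s => Phi s + Psi s) = cond_exp h m Phi + cond_exp h m Psi.
Proof.
elim: m => [//|m IH] h Phi Psi /=.
by rewrite -big_split /=; apply: eq_bigr => x _; rewrite IH mulrDr.
Qed.

Lemma cond_expZ m : forall h c Phi,
  cond_exp h m (fun s => c * Phi s) = c * cond_exp h m Phi.
Proof.
elim: m => [//|m IH] h c Phi /=.
by rewrite mulr_sumr; apply: eq_bigr => x _; rewrite IH mulrCA.
Qed.

Lemma cond_exp_sum m : forall h (F : 'I_d -> history d -> R),
  cond_exp h m (fun s => \sum_(a < d) F a s) = \sum_(a < d) cond_exp h m (F a).
Proof.
elim: m => [//|m IH] h F /=.
by rewrite exchange_big /=; apply: eq_bigr => x _; rewrite IH mulr_sumr.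
Qed.

Lemma sum_action_censor (F : 'I_d * bool -> R) :
  \sum_(x : 'I_d * bool) F x = \sum_(a < d) (F (a, true) + F (a, false)).
Proof.
rewrite (eq_bigr (fun x => F (x.1, x.2))); last by case.
rewrite -(pair_bigA _ (fun a b => F (a, b))) /=.
by apply: eq_bigr => a _; rewrite big_bool.
Qed.

Variables (T : nat) (A : nat -> {set 'I_d}).
Hypothesis p_range : forall a, 0 < p a <= 1.
Hypothesis pi_valid : valid_policy T A pi.

Lemma bern_ge0 a b : 0 <= bern (p a) b.
Proof. by have /andP[p0 p1] := p_range a; case: b; rewrite /bern ?subr_ge0 // ltW. Qed.

Lemma step_prob_ge0 h x : (size h < T)%N -> 0 <= step_prob h x.
Proof.
by move=> hs; have [pi0 _] := pi_valid hs; apply: mulr_ge0 => //; exact: bern_ge0.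
Qed.

Lemma step_prob_sum1 h : (size h < T)%N -> \sum_x step_prob h x = 1.
Proof.
move=> hs; have [_ [pi_sum _]] := pi_valid hs; rewrite sum_action_censor -pi_sum.
by apply: eq_bigr => a _; rewrite /step_prob /= -mulrDr /bern subrKC mulr1.
Qed.

Lemma cond_exp_cst m : forall h c, (size h + m <= T)%N -> cond_exp h m (fun _ => c) = c.
Proof.
elim: m => [//|m IH] h c hs /=.
under eq_bigr => x _ do rewrite IH ?size_rcons ?addSnnS //.
rewrite -mulr_suml step_prob_sum1 ?mul1r //.
by apply: leq_trans hs; rewrite -addSnnS leq_addr.
Qed.

Lemma ler_cond_exp m : forall h Phi Psi, (size h + m <= T)%N ->
  (forall s, size s = (size h + m)%N -> Phi s <= Psi s) ->
  cond_exp h m Phi <= cond_exp h m Psi.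
Proof.
elim: m => [|m IH] h Phi Psi hs H /=; first by apply: H; rewrite addn0.
apply: ler_sum => x _; apply: ler_wpM2l.
  by apply: step_prob_ge0; apply: leq_trans hs; rewrite -addSnnS leq_addr.
apply: IH; first by rewrite size_rcons addSnnS.
by move=> s; rewrite size_rcons addSnnS; apply: H.
Qed.

End TrajectoryExpectation.

Section HistorySums.
Variables (R : realType) (d : nat).

Fixpoint path_sum_from (G : history d -> 'I_d * bool -> R) (acc s : history d) : R :=
  match s with
  | [::] => 0
  | x :: s' => G acc x + path_sum_from G (rcons acc x) s'
  end.

Definition path_sum G s := path_sum_from G [::] s.

Lemma path_sum_from_rcons G s : forall acc x,
  path_sum_from G acc (rcons s x) = path_sum_from G acc s + G (acc ++ s) x.
Proof.
elim: s => [|y s IH] acc x /=; first by rewrite addr0 add0r cats0.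
by rewrite IH addrA cat_rcons.
Qed.

Lemma path_sum_nil G : path_sum G [::] = 0. Proof. by []. Qed.

Lemma path_sum_rcons G s x : path_sum G (rcons s x) = path_sum G s + G s x.
Proof. exact: path_sum_from_rcons. Qed.

Lemma tuple_sum_path_sum G m : forall acc (tau : m.-tuple ('I_d * bool)),
  \sum_(t < m) G (acc ++ take t tau) (tnth tau t) = path_sum_from G acc tau.
Proof.
elim: m => [|m IH] acc tau; first by rewrite big_ord0 (tuple0 tau).
case: tau => [[|x u] //= hu].
rewrite big_ord_recl take0 cats0 -(IH _ (Tuple hu)); congr (_ + _).
by apply: eq_bigr => i _; rewrite !(tnth_nth x) /= cat_rcons add0n.
Qed.

Definition pulls (a : 'I_d) (s : history d) : nat :=
  count (fun u : 'I_d * bool => u.1 == a) s.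

Lemma pulls_rcons (a : 'I_d) (s : history d) (x : 'I_d * bool) : pulls a (rcons s x) = (pulls a s + (x.1 == a))%N.
Proof. by rewrite /pulls -cats1 count_cat /= addn0. Qed.

Lemma Ncount_rcons (s : history d) (a : 'I_d) (x : 'I_d * bool) : Ncount (rcons s x) a = (Ncount s a + ((x.1 == a) && x.2))%N.
Proof. by rewrite /Ncount -cats1 count_cat /= addn0. Qed.

Lemma sum_indicator (b : 'I_d) (Y : 'I_d -> R) : \sum_(a < d) (b == a)%:R * Y a = Y b.
Proof.
rewrite (bigD1 b) //= eqxx mul1r big1 ?addr0 // => a ab.
by rewrite eq_sym (negbTE ab) mul0r.
Qed.

Lemma sum_pulls s : \sum_(a < d) (pulls a s)%:R = (size s)%:R :> R.
Proof.
elim/last_ind: s => [|s x IH]; first by rewrite big1.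
rewrite size_rcons -addn1 natrD -IH.
under eq_bigr => a _ do rewrite pulls_rcons natrD.
rewrite big_split /=; congr (_ + _).
by rewrite -[RHS](sum_indicator x.1 (fun=> 1)); apply: eq_bigr => a _; rewrite mulr1.
Qed.

Lemma path_sum_by_arm (F : 'I_d -> nat -> R) s :
  path_sum (fun h x => F x.1 (pulls x.1 h)) s = \sum_(a < d) \sum_(k < pulls a s) F a k.
Proof.
elim/last_ind: s => [|s x IH].
  by rewrite path_sum_nil big1 // => a _; rewrite big_ord0.
rewrite path_sum_rcons IH -(sum_indicator x.1 (fun a => F a (pulls a s))) -big_split /=.
apply: eq_bigr => a _; rewrite pulls_rcons.
case: (x.1 == a); last by rewrite addn0 mul0r addr0.
by rewrite addn1 big_ord_recr /= mul1r.
Qed.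

End HistorySums.

Section CensoredBound.
Variables (R : realType) (d T : nat) (p : 'I_d -> R) (A : nat -> {set 'I_d})
  (lam alpha delta : R) (psi : R -> R) (pi : history d -> 'I_d -> R).
Hypotheses (d_gt0 : (0 < d)%N) (T_ge2 : (2 <= T)%N) (p_range : forall a, 0 < p a <= 1)
  (lam_gt0 : 0 < lam) (alpha_gt0 : 0 < alpha) (delta_range : 0 < delta < 1)
  (psi_deriv : forall x : R, 0 < x -> is_derive x 1 psi (x `^ (- alpha)))
  (pi_valid : valid_policy T A pi).

Definition round_term (h : history d) (x : 'I_d * bool) : R :=
  ((Ncount h x.1)%:R + lam) `^ (- alpha).

Definition lam_inv : R := (lam `^ alpha)^-1.

(* Value of the term of arm a after k pulls if exactly a (1 - delta) p_a
   fraction of them were uncensored. *)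
Definition ideal_term (a : 'I_d) (k : nat) : R :=
  ((1 - delta) * p a * k%:R + lam) `^ (- alpha).

Definition lam_shift : R := lam / (1 - delta).
Definition delta_factor : R := ((1 - delta) `^ alpha)^-1.

(* A primitive of y |-> ideal_term a y, expressed through psi. *)
Definition ideal_primitive (a : 'I_d) (y : R) : R :=
  delta_factor / p a * psi (p a * y + lam_shift).

Definition burn_in (a : 'I_d) : R := 24 * ln T%:R / p a.
Definition in_burn_in (a : 'I_d) (k : nat) : R :=
  ((1 <= k)%N && (k%:R < burn_in a)%R)%:R.

(* The exponential supermartingale exp(-delta N_a + mgf_rate a * pulls_a). *)
Definition mgf_rate (a : 'I_d) : R := p a * (1 - expR (- delta)).
Definition exp_mart (a : 'I_d) (h : history d) : R :=
  expR (- delta * (Ncount h a)%:R + mgf_rate a * (pulls a h)%:R).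

Definition tail_rate (a : 'I_d) : R := delta ^+ 2 * p a / 2.
Definition tail_weight (a : 'I_d) (k : nat) : R :=
  (burn_in a <= k%:R)%R%:R * expR (- (tail_rate a * k%:R)).

Lemma pa_gt0 a : 0 < p a. Proof. by case/andP: (p_range a). Qed.
Lemma pa_le1 a : p a <= 1. Proof. by case/andP: (p_range a). Qed.
Lemma delta_gt0 : 0 < delta. Proof. by case/andP: delta_range. Qed.
Lemma delta_lt1 : delta < 1. Proof. by case/andP: delta_range. Qed.
Lemma lam_inv_ge0 : 0 <= lam_inv. Proof. by rewrite invr_ge0 powR_ge0. Qed.
Lemma lam_invE : lam `^ (- alpha) = lam_inv. Proof. by rewrite powRN. Qed.
Lemma lam_shift_gt0 : 0 < lam_shift.
Proof. by rewrite divr_gt0 // subr_gt0 delta_lt1. Qed.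
Lemma delta_factor_ge0 : 0 <= delta_factor.
Proof. by rewrite invr_ge0 powR_ge0. Qed.
Lemma exp_mart_ge0 a h : 0 <= exp_mart a h. Proof. exact: expR_ge0. Qed.
Lemma tail_weight_ge0 a k : 0 <= tail_weight a k.
Proof. by apply: mulr_ge0; [exact: ler0n | exact: expR_ge0]. Qed.
Lemma burn_in_gt0 a : 0 < burn_in a.
Proof.
apply: divr_gt0; last exact: pa_gt0.
by apply: mulr_gt0 => //; apply: ln_gt0; rewrite ltr1n.
Qed.
Lemma deff_gt0 : 0 < deff p.
Proof.
rewrite /deff (bigD1 (Ordinal d_gt0)) //=; apply: ltr_wpDr.
  by apply: sumr_ge0 => a _; rewrite invr_ge0 ltW ?pa_gt0.
by rewrite invr_gt0 pa_gt0.
Qed.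

Lemma mgf_rate_ge a : p a * (delta - delta ^+ 2 / 2) <= mgf_rate a.
Proof.
apply: ler_wpM2l; first exact: ltW (pa_gt0 a).
have := expRN_le_quadratic (ltW delta_gt0); lra.
Qed.

(* Key pointwise inequality: if N_b >= (1 - delta) p_b k the round's term is
   at most the ideal one; otherwise it is at most lam^(-alpha), and either
   arm b is in burn-in or exp_mart * tail_weight >= 1. *)
Lemma round_term_le h x : round_term h x <=
  ideal_term x.1 (pulls x.1 h) + lam_inv * (in_burn_in x.1 (pulls x.1 h)
    + exp_mart x.1 h * tail_weight x.1 (pulls x.1 h)).
Proof.
set b := x.1; set k := pulls b h; set N : R := (Ncount h b)%:R.
have N0 : 0 <= N by rewrite /N ler0n.
have k0 : 0 <= k%:R :> R by rewrite ler0n.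
have pb := pa_gt0 b; have dl := delta_lt1; have dg := delta_gt0.
have rest_ge0 : 0 <= lam_inv * (in_burn_in b k + exp_mart b h * tail_weight b k).
  apply: mulr_ge0; first exact: lam_inv_ge0.
  by apply: addr_ge0; [exact: ler0n | apply: mulr_ge0; [exact: exp_mart_ge0|exact: tail_weight_ge0]].
case: (lerP ((1 - delta) * p b * k%:R) N) => hN.
  rewrite -[round_term h x]addr0; apply: lerD => //.
  apply: powRN_le => //; last by rewrite lerD2r.
  by apply: ltr_pwDr => //; apply: mulr_ge0 => //; apply: mulr_ge0; lra.
have term_le : round_term h x <= lam_inv.
  by rewrite -lam_invE; apply: powRN_le => //; rewrite lerDr.
apply: (le_trans term_le); rewrite -{1}[lam_inv]add0r; apply: lerD; first exact: powR_ge0.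
rewrite -[X in X <= _]mulr1; apply: ler_wpM2l; first exact: lam_inv_ge0.
have k1 : (1 <= k)%N.
  by clear rest_ge0 term_le; case: k hN k0 => // hN _; rewrite mulr0 in hN; lra.
case: (ltrP (k%:R) (burn_in b)) => hK.
  by rewrite /in_burn_in k1 hK /= lerDl; apply: mulr_ge0; [exact: exp_mart_ge0|exact: tail_weight_ge0].
rewrite -{1}[1]add0r; apply: lerD; first exact: ler0n.
rewrite /exp_mart /tail_weight hK mul1r -expRD; apply: le_trans (expR_ge1Dx _); rewrite lerDl.
have h1 : mgf_rate b * k%:R >= p b * (delta - delta ^+ 2 / 2) * k%:R.
  by apply: ler_wpM2r => //; exact: mgf_rate_ge.
have h2 : delta * N <= delta * ((1 - delta) * p b * k%:R) by apply: ler_wpM2l; lra.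
rewrite /tail_rate -/N -/k; lra.
Qed.

Definition ideal_part (s : history d) : R :=
  path_sum (fun h x => ideal_term x.1 (pulls x.1 h)) s.
Definition burn_in_part (a : 'I_d) (s : history d) : R :=
  path_sum (fun h x => (x.1 == a)%:R * in_burn_in a (pulls x.1 h)) s.
Definition tail_part (a : 'I_d) (s : history d) : R :=
  path_sum (fun h x => (x.1 == a)%:R * (exp_mart a h * tail_weight a (pulls a h))) s.

Lemma Valpha_split s : path_sum round_term s <=
  ideal_part s + lam_inv * \sum_(a < d) (burn_in_part a s + tail_part a s).
Proof.
elim/last_ind: s => [|s x IH].
  by rewrite /ideal_part !path_sum_nil big1 ?mulr0 ?addr0 // => a _;
    rewrite /burn_in_part /tail_part !path_sum_nil addr0.
have parts_rcons : \sum_(a < d) (burn_in_part a (rcons s x) + tail_part a (rcons s x)) =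
    \sum_(a < d) (burn_in_part a s + tail_part a s) +
    (in_burn_in x.1 (pulls x.1 s) + exp_mart x.1 s * tail_weight x.1 (pulls x.1 s)).
  rewrite -(sum_indicator x.1 (fun a => in_burn_in a (pulls x.1 s)
    + exp_mart a s * tail_weight a (pulls a s))) -big_split /=.
  by apply: eq_bigr => a _; rewrite /burn_in_part /tail_part !path_sum_rcons /=; ring.
rewrite parts_rcons /ideal_part !path_sum_rcons -/(ideal_part s).
have := lerD IH (round_term_le s x); lra.
Qed.

Lemma sum_in_burn_in_le a n : \sum_(k < n) in_burn_in a k <= burn_in a.
Proof.
suff: \sum_(k < n) in_burn_in a k <= (n.-1)%:R /\ \sum_(k < n) in_burn_in a k <= burn_in a.
  by case.
elim: n => [|n [IH1 IH2]]; first by rewrite big_ord0 lexx ltW ?burn_in_gt0.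
rewrite big_ord_recr /= /in_burn_in.
case E: ((1 <= n)%N && (n%:R < burn_in a)%R); last first.
  by rewrite addr0; split => //; apply: le_trans IH1 _; rewrite ler_nat leq_pred.
move/andP: E => [n1 nK]; case: n n1 nK IH1 IH2 => // n _ nK IH1 IH2 /=.
have H1 : \sum_(i < n.+1) in_burn_in a i + 1 <= n.+1%:R by rewrite -natr1; apply: lerD.
by split => //; apply: le_trans H1 (ltW nK).
Qed.

Lemma burn_in_part_le a s : burn_in_part a s <= burn_in a.
Proof.
rewrite /burn_in_part (path_sum_by_arm (fun b k => (b == a)%:R * in_burn_in a k)).
under eq_bigr => b _ do rewrite -mulr_sumr eq_sym.
by rewrite sum_indicator; apply: sum_in_burn_in_le.
Qed.

Lemma ideal_primitive_nondecr a (y z : R) : 0 <= y -> y <= z ->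
  ideal_primitive a y <= ideal_primitive a z.
Proof.
move=> y0 yz; have pa := pa_gt0 a; have L0 := lam_shift_gt0.
apply: ler_wpM2l; first by apply: divr_ge0; [exact: delta_factor_ge0 | exact: ltW].
apply: psi_nondecr => //; first by rewrite ltr_wpDl // mulr_ge0 // ltW.
by rewrite lerD2r ler_wpM2l // ltW.
Qed.

Lemma ideal_term_le_increment a k :
  ideal_term a k.+1 <= ideal_primitive a k.+1%:R - ideal_primitive a k%:R.
Proof.
have pa := pa_gt0 a; have L0 := lam_shift_gt0; have dl := delta_lt1.
set u := p a * k%:R + lam_shift; set v := p a * k.+1%:R + lam_shift.
have u0 : 0 < u by rewrite /u ltr_wpDl // mulr_ge0 // ltW.
have uv : u <= v by rewrite /u /v lerD2r ler_pM2l // ler_nat.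
have vu : v - u = p a by rewrite /u /v -natr1; ring.
have -> : ideal_term a k.+1 = delta_factor * v `^ (- alpha).
  rewrite /ideal_term /delta_factor -powRN -powRM ?subr_ge0 ?ltW //; last exact: lt_le_trans uv.
  by congr (_ `^ _); rewrite /v /lam_shift; field; rewrite subr_eq0; apply/eqP => h1; lra.
rewrite /ideal_primitive -/u -/v -mulrBr.
have c0 : 0 <= delta_factor / p a by apply: divr_ge0; [exact: delta_factor_ge0 | exact: ltW].
apply: le_trans _ (ler_wpM2l c0 (psi_increment_ge alpha_gt0 psi_deriv u0 uv)).
by rewrite vu (mulrC (v `^ _)) mulrA divfK ?lt0r_neq0.
Qed.

Lemma sum_ideal_term_le a n :
  \sum_(k < n) ideal_term a k <= lam_inv + (ideal_primitive a n%:R - ideal_primitive a 0).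
Proof.
have H m : \sum_(k < m.+1) ideal_term a k <= lam_inv + (ideal_primitive a m%:R - ideal_primitive a 0).
  elim: m => [|m IH].
    by rewrite big_ord1 /ideal_term mulr0 add0r lam_invE subrr addr0.
  by rewrite big_ord_recr /=; have := ideal_term_le_increment a m; lra.
case: n => [|n]; first by rewrite big_ord0 subrr addr0 lam_inv_ge0.
apply: le_trans (H n) _; rewrite lerD2l lerD2r.
by apply: ideal_primitive_nondecr; rewrite ?ler0n // ler_nat leqnSn.
Qed.

(* Concavity of psi, via its tangent at M, makes the increment of the
   primitive affine in n; M is later chosen as T / d_eff + lam_shift. *)
Lemma ideal_primitive_tangent (n : nat) a (M : R) : 0 < M ->
  ideal_primitive a n%:R - ideal_primitive a 0 <= delta_factor * M `^ (- alpha) * n%:R +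
     delta_factor * (M `^ (- alpha) * (lam_shift - M) + (psi M - psi lam_shift)) * (p a)^-1.
Proof.
move=> M0; have pa := pa_gt0 a; have L0 := lam_shift_gt0.
have u0 : 0 < p a * n%:R + lam_shift by rewrite ltr_wpDl // mulr_ge0 // ltW.
have H := psi_tangent alpha_gt0 psi_deriv u0 M0.
rewrite /ideal_primitive mulr0 add0r -mulrBr.
have c0 : 0 <= delta_factor / p a by apply: divr_ge0; [exact: delta_factor_ge0 | exact: ltW].
have H2 : psi (p a * n%:R + lam_shift) - psi lam_shift <=
   M `^ (- alpha) * (p a * n%:R + lam_shift - M) + (psi M - psi lam_shift) by lra.
apply: le_trans (ler_wpM2l c0 H2) _.
by apply: le_of_eq; field; exact: lt0r_neq0.
Qed.

Definition ideal_bound : R := d%:R * lam_inv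
  + delta_factor * deff p * (psi (T%:R / deff p + lam_shift) - psi lam_shift).

(* Pathwise bound on the ideal part over a full horizon: group by arm,
   telescope, and sum the tangent bounds using sum_a pulls_a = T. *)
Lemma ideal_part_le s : size s = T -> ideal_part s <= ideal_bound.
Proof.
move=> hs; set M := T%:R / deff p + lam_shift.
have D0 := deff_gt0; have L0 := lam_shift_gt0.
have M0 : 0 < M by rewrite /M ltr_wpDl // divr_ge0 // ?ler0n // ltW.
rewrite /ideal_part (path_sum_by_arm ideal_term).
apply: le_trans (ler_sum _ (fun a _ => sum_ideal_term_le a (pulls a s))) _.
rewrite big_split /= sumr_const card_ord; apply: lerD; first by rewrite mulr_natl.
apply: le_trans (ler_sum _ (fun a _ => ideal_primitive_tangent (pulls a s) a M0)) _.
rewrite big_split /= -mulr_sumr -mulr_sumr sum_pulls hs -/(deff p).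
by rewrite /M; apply: le_of_eq; field; exact: lt0r_neq0.
Qed.

Definition tail_sum (a : 'I_d) (k m : nat) : R := \sum_(i < m) tail_weight a (k + i).

Lemma tail_sum_ge0 a k m : 0 <= tail_sum a k m.
Proof. by apply: sumr_ge0 => i _; exact: tail_weight_ge0. Qed.

Lemma tail_sum_nondecr a k m : tail_sum a k m <= tail_sum a k m.+1.
Proof. by rewrite /tail_sum big_ord_recr /= lerDl tail_weight_ge0. Qed.

Lemma tail_sumS a k m : tail_sum a k m.+1 = tail_weight a k + tail_sum a k.+1 m.
Proof.
rewrite /tail_sum big_ord_recl /= addn0; congr (_ + _).
by apply: eq_bigr => i _; rewrite addSnnS.
Qed.

Lemma exp_mart_other a h (x : 'I_d * bool) : x.1 != a -> exp_mart a (rcons h x) = exp_mart a h.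
Proof. by move=> /negbTE xa; rewrite /exp_mart Ncount_rcons pulls_rcons xa /= !addn0. Qed.

(* Supermartingale step: pulling arm a does not increase exp_mart a in
   expectation, since p_a e^(-delta) + (1 - p_a) <= e^(-mgf_rate a). *)
Lemma exp_mart_step a h :
  bern (p a) true * exp_mart a (rcons h (a, true))
  + bern (p a) false * exp_mart a (rcons h (a, false)) <= exp_mart a h.
Proof.
rewrite /exp_mart !Ncount_rcons !pulls_rcons /= eqxx /= !natrD /= addr0.
set N := (Ncount h a)%:R; set k := (pulls a h)%:R; set c := mgf_rate a.
have -> : - delta * (N + 1) + c * (k + 1) = (- delta * N + c * k) + (c - delta) by ring.
have -> : - delta * N + c * (k + 1) = (- delta * N + c * k) + c by ring.
rewrite [expR (_ + (c - delta))]expRD [expR (_ + c)]expRD /bern.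
set E := expR (- delta * N + c * k).
have mgf_le1 : p a * expR (c - delta) + (1 - p a) * expR c <= 1.
  have ec := expR_gt0 c.
  have inv : expR c * expR (- c) = 1 by rewrite -expRD subrr expR0.
  have -> : p a * expR (c - delta) + (1 - p a) * expR c = expR c * (1 - c).
    by rewrite expRD /c /mgf_rate; ring.
  by rewrite -inv; apply: ler_wpM2l; [exact: ltW | have := expR_ge1Dx (- c); lra].
have := ler_wpM2l (expR_ge0 (- delta * N + c * k)) mgf_le1; rewrite mulr1 -/E.
by apply: le_trans; apply: le_of_eq; ring.
Qed.

Lemma tail_part_supermart a m : forall h, (size h + m <= T)%N ->
  cond_exp p pi h m (tail_part a) <= tail_part a h + exp_mart a h * tail_sum a (pulls a h) m.
Proof.
elim: m => [|m IH] h hs /=; first by rewrite /tail_sum big_ord0 mulr0 addr0.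
have hs' : (size h < T)%N by apply: leq_trans hs; rewrite -addSnnS leq_addr.
have IH' x : cond_exp p pi (rcons h x) m (tail_part a) <=
    tail_part a (rcons h x) + exp_mart a (rcons h x) * tail_sum a (pulls a (rcons h x)) m.
  by apply: IH; rewrite size_rcons addSnnS.
apply: le_trans (ler_sum _ (fun x _ => ler_wpM2l (step_prob_ge0 p_range pi_valid x hs') (IH' x))) _.
have [pi0 [pi_sum _]] := pi_valid hs'.
rewrite sum_action_censor -[X in _ <= X]mul1r -pi_sum mulr_suml.
apply: ler_sum => b _.
rewrite /step_prob /tail_part !path_sum_rcons /= !pulls_rcons /= -/(tail_part a h).
rewrite -!mulrA -mulrDr; apply: ler_wpM2l; first exact: pi0.
have bt := bern_ge0 p_range b true; have bf := bern_ge0 p_range b false.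
have bs : bern (p b) true + bern (p b) false = 1 by rewrite /bern; ring.
have Wh := exp_mart_ge0 a h; have wk := tail_weight_ge0 a (pulls a h).
case: (eqVneq b a) => [->|ba].
  rewrite addn1 tail_sumS (_ : true%:R = 1 :> R) // mul1r.
  have HW := ler_wpM2r (tail_sum_ge0 a (pulls a h).+1 m) (exp_mart_step a h).
  have := pa_le1 a; rewrite /bern in HW *; lra.
rewrite addn0 !exp_mart_other // (_ : false%:R = 0 :> R) // mul0r !addr0.
have HS := ler_wpM2l Wh (tail_sum_nondecr a (pulls a h) m).
have := tail_sum_ge0 a (pulls a h) m; lra.
Qed.

Lemma tail_rate_gt0 a : 0 < tail_rate a.
Proof. by rewrite divr_gt0 // mulr_gt0 ?pa_gt0 // exprn_gt0 // delta_gt0. Qed.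

Lemma tail_rate_le1 a : tail_rate a <= 1.
Proof.
have := pa_le1 a; have := pa_gt0 a; have := delta_lt1; have := delta_gt0.
by rewrite /tail_rate => h1 h2 h3 h4; nra.
Qed.

Lemma tail_sum_geometric a n : tail_sum a 0 n * (1 - expR (- tail_rate a)) <=
  expR (- (tail_rate a * burn_in a)) - (if burn_in a <= n%:R
    then expR (- (tail_rate a * n%:R)) else expR (- (tail_rate a * burn_in a))).
Proof.
have K0 := burn_in_gt0 a; have r0 := tail_rate_gt0 a.
elim: n => [|n IH]; first by rewrite /tail_sum big_ord0 mul0r (lt_geF K0) subrr.
rewrite /tail_sum big_ord_recr /= /tail_weight add0n -/(tail_sum a 0 n).
have expS : expR (- (tail_rate a * n%:R)) * expR (- tail_rate a)
    = expR (- (tail_rate a * n.+1%:R)).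
  by rewrite -expRD -natr1; congr expR; ring.
case: (lerP (burn_in a) n%:R) => hK.
  have hK1 : burn_in a <= n.+1%:R by apply: le_trans hK _; rewrite ler_nat.
  by rewrite hK1 /= mul1r; move: IH; rewrite hK mulrDl; have := expS; lra.
rewrite /= mul0r addr0; rewrite (lt_geF hK) subrr in IH.
case: (lerP (burn_in a) n.+1%:R) => hK1; last by rewrite subrr.
apply: (le_trans IH).
by rewrite subr_ge0 ler_expR lerN2 ler_wpM2l // ltW.
Qed.

Definition tail_bound (a : 'I_d) : R := 4 / (delta ^+ 2 * p a * T%:R `^ (12 * delta ^+ 2)).

(* Since tail_rate * burn_in = 12 delta^2 ln T, the whole tail weight is
   T^(-12 delta^2) / (1 - e^(-rate)) <= 4 / (delta^2 p_a T^(12 delta^2)). *)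
Lemma tail_sum_le a : tail_sum a 0 T <= tail_bound a.
Proof.
have K0 := burn_in_gt0 a; have r0 := tail_rate_gt0 a; have r1 := tail_rate_le1 a.
have pa := pa_gt0 a; have dg := delta_gt0.
have hq : tail_rate a / 2 <= 1 - expR (- tail_rate a).
  by have := expRN_le_quadratic (ltW r0); nra.
have q0 : 0 < 1 - expR (- tail_rate a) by apply: lt_le_trans hq; rewrite divr_gt0.
have H : tail_sum a 0 T <= expR (- (tail_rate a * burn_in a)) / (1 - expR (- tail_rate a)).
  rewrite ler_pdivlMr //; apply: le_trans (tail_sum_geometric a T) _.
  by rewrite lerBlDr lerDl; case: ifP => _; exact: expR_ge0.
apply: le_trans H _.
have T0 : (0 < T%:R :> R) by rewrite ltr0n; apply: leq_trans T_ge2.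
have -> : tail_rate a * burn_in a = 12 * delta ^+ 2 * ln T%:R.
  by rewrite /tail_rate /burn_in; field; apply: lt0r_neq0.
rewrite /tail_bound /powR gt_eqF // expRN.
set X := expR (12 * delta ^+ 2 * ln T%:R).
have X0 : 0 < X by exact: expR_gt0.
rewrite ler_pdivrMr //.
have c0 : 0 <= 4 / (delta ^+ 2 * p a * X).
  by apply: divr_ge0 => //; rewrite ltW // !mulr_gt0 // exprn_gt0.
apply: le_trans _ (ler_wpM2l c0 hq).
by apply: le_of_eq; rewrite /tail_rate; field; rewrite !lt0r_neq0.
Qed.

Lemma expected_Valpha_cond_exp :
  expected_Valpha T p pi lam alpha = cond_exp p pi [::] T (path_sum round_term).
Proof.
rewrite /expected_Valpha -(trajectory_sum_cond_exp p pi T [::] (path_sum round_term)).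
apply: eq_bigr => tau _; congr (_ * _).
by rewrite /Valpha /path_sum -(tuple_sum_path_sum round_term [::] tau).
Qed.

(* Expectation of the decomposition: the ideal and burn-in parts are bounded
   pathwise, the tail part through the supermartingale. *)
Lemma expected_Valpha_le_parts : expected_Valpha T p pi lam alpha <=
  ideal_bound + lam_inv * \sum_(a < d) (burn_in a + tail_bound a).
Proof.
have hT0 : (size ([::] : history d) + T <= T)%N by [].
rewrite expected_Valpha_cond_exp.
apply: le_trans (ler_cond_exp p_range pi_valid hT0 (fun s _ => Valpha_split s)) _.
rewrite cond_expD cond_expZ cond_exp_sum; under eq_bigr => a _ do rewrite cond_expD.
apply: lerD.
  rewrite -(cond_exp_cst p pi_valid ideal_bound hT0).
  by apply: (ler_cond_exp p_range pi_valid hT0) => s; exact: ideal_part_le.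
apply: ler_wpM2l; first exact: lam_inv_ge0.
apply: ler_sum => a _; apply: lerD.
  rewrite -(cond_exp_cst p pi_valid (burn_in a) hT0).
  by apply: (ler_cond_exp p_range pi_valid hT0) => s _; exact: burn_in_part_le.
apply: le_trans (tail_part_supermart a hT0) _.
rewrite /tail_part path_sum_nil add0r /exp_mart /= !mulr0 addr0 expR0 mul1r.
exact: tail_sum_le.
Qed.

Lemma parts_total : ideal_bound + lam_inv * \sum_(a < d) (burn_in a + tail_bound a) =
    deff p / ((1 - delta) `^ alpha) *
      (psi (T%:R / deff p + lam / (1 - delta)) - psi (lam / (1 - delta)))
    + (24 * deff p * ln T%:R + d%:R) / (lam `^ alpha)
    + 4 * deff p / (lam `^ alpha * delta ^+ 2 * T%:R `^ (12 * delta ^+ 2)).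
Proof.
have T0 : (0 < T%:R :> R) by rewrite ltr0n; apply: leq_trans T_ge2.
have X0 : 0 < T%:R `^ (12 * delta ^+ 2) by apply: powR_gt0.
have dg := delta_gt0; have dl := delta_lt1.
have -> : \sum_(a < d) (burn_in a + tail_bound a) =
    24 * ln T%:R * deff p + 4 / (delta ^+ 2 * T%:R `^ (12 * delta ^+ 2)) * deff p.
  rewrite big_split /= /deff /burn_in /tail_bound !mulr_sumr; congr (_ + _); apply: eq_bigr => a _.
  by have := pa_gt0 a => pa; field; rewrite !lt0r_neq0 ?exprn_gt0.
have l0 : lam `^ alpha != 0 by rewrite lt0r_neq0 // powR_gt0.
have d0 : (1 - delta) `^ alpha != 0 by rewrite lt0r_neq0 // powR_gt0 // subr_gt0.
rewrite /ideal_bound /lam_inv /delta_factor /lam_shift.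
by field; rewrite l0 d0 !lt0r_neq0 ?exprn_gt0.
Qed.

End CensoredBound.

Unset Implicit Arguments.

Theorem proposition2 (R : realType) (d T : nat) (p : 'I_d -> R)
  (A : nat -> {set 'I_d}) (lam alpha delta : R) (psi : R -> R)
  (pi : history d -> 'I_d -> R) :
  (0 < d)%N -> (2 <= T)%N ->
  (forall a, 0 < p a <= 1) ->
  (forall t, (1 <= t <= T)%N -> A t != finset.set0) ->
  0 < lam -> 0 < alpha -> 0 < delta < 1 ->
  (forall x : R, 0 < x -> is_derive x 1 psi (x `^ (- alpha))) ->
  valid_policy T A pi ->
  expected_Valpha T p pi lam alpha <=
    deff p / ((1 - delta) `^ alpha) *
      (psi (T%:R / deff p + lam / (1 - delta)) - psi (lam / (1 - delta)))
    + (24 * deff p * ln T%:R + d%:R) / (lam `^ alpha)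
    + 4 * deff p / (lam `^ alpha * delta ^+ 2 * T%:R `^ (12 * delta ^+ 2)).
Proof.
move=> d_gt0 T_ge2 p_range _ lam_gt0 alpha_gt0 delta_range psi_deriv pi_valid.
rewrite -(parts_total alpha psi T_ge2 p_range lam_gt0 delta_range).
exact: (expected_Valpha_le_parts d_gt0 T_ge2 p_range lam_gt0 alpha_gt0 delta_range
  psi_deriv pi_valid).
Qed.
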